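(* For $\eta\in\mathbb{R}$, let $\mathfrak{s}_\eta=\mathfrak{r}_\eta\ltimes_{\mu_\eta}\mathbb{R}^4$, where $\mathfrak{r}_\eta=\langle e_1,e_2,e_3\rangle$ has non-zero brackets $[e_1,e_2]=e_2+\eta e_3$, $[e_1,e_3]=-\eta e_2+e_3$, $\mathbb{R}^4=\langle e_4,e_5,e_6,e_7\rangle$ is abelian, and $\mu_\eta:\mathfrak{r}_\eta\to\mathfrak{gl}(4,\mathbb{R})$ is given (in the basis $e_4,\dots,e_7$) by \[ \mu_\eta(e_1)=\begin{pmatrix}-\frac12&0&0&0\\0&-\frac12&0&0\\0&0&\frac12&\eta\\0&0&-\eta&\frac12\end{pmatrix},\ \mu_\eta(e_2)=\begin{pmatrix}0&0&0&0\\0&0&0&0\\0&-1&0&0\\-1&0&0&0\end{pmatrix},\ \mu_\eta(e_3)=\begin{pmatrix}0&0&0&0\\0&0&0&0\\-1&0&0&0\\0&1&0&0\end{pmatrix}. \] Then the 3-form $\varphi=e^{123}+e^{145}+e^{167}+e^{246}-e^{257}-e^{347}-e^{356}$ on $\mathfrak{s}_\eta$ (with $(e^i)$ dual to $(e_i)$) is exact, defines an ERP closed $\mathrm{G}_2$-structure, and has intrinsic torsion form $\tau=3e^{45}-3e^{67}$. For $\eta=0$ the Lie algebra is completely solvable, while for $\eta\neq0$ it is solvable but not completely solvable, and the Lie algebras $\mathfrak{s}_\eta$, $\eta\ge0$, are pairwise non-isomorphic.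
   Context: $\mathfrak{r}\ltimes_\mu\mathbb{R}^4$ denotes the semidirect product with bracket $[X,v]=\mu(X)v$ for $X\in\mathfrak{r}$, $v\in\mathbb{R}^4$. A $\mathrm{G}_2$-structure on a 7-dimensional Lie algebra is a 3-form $\varphi$ equal to $e^{123}+e^{145}+e^{167}+e^{246}-e^{257}-e^{347}-e^{356}$ in some basis; it determines an inner product $g_\varphi$ (making that basis orthonormal), a Hodge star $*_\varphi$ and norm $|\cdot|_\varphi$. It is closed if $d\varphi=0$ ($d$ the Chevalley–Eilenberg differential); then its intrinsic torsion form is the unique 2-form $\tau$ with $\tau\wedge*_\varphi\varphi=0$ and $d*_\varphi\varphi=\tau\wedge\varphi$. It is ERP if $d\tau=\frac16|\tau|_\varphi^2\varphi+\frac16*_\varphi(\tau\wedge\tau)$. A solvable Lie algebra is completely solvable if all $\mathrm{ad}_X$ have only real eigenvalues. *)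

(* Real numbers are modelled by an arbitrary real closed
   field R (elementarily equivalent to the reals). *)
From HB Require Import structures.
From mathcomp Require Import all_boot all_order all_algebra.
Set Implicit Arguments. Unset Strict Implicit. Unset Printing Implicit Defensive.
Import Order.TTheory GRing.Theory Num.Theory.
Local Open Scope ring_scope.

Section G2.
Variable R : rcfType.

(* Lie algebras on R^n given on the basis e_0..e_(n-1):                *)
(*   brk i j = [e_i, e_j] as a row vector of coordinates.             *)
Definition lie_bracket n (brk : 'I_n -> 'I_n -> 'rV[R]_n) (x y : 'rV[R]_n)
  : 'rV[R]_n := \sum_(i < n) \sum_(j < n) (x 0 i * y 0 j) *: brk i j.

Definition basis_vec n (i : 'I_n) : 'rV[R]_n := delta_mx 0 i.

(* matrix of ad_x acting on row vectors: v *m ad_mx x = [x, v] *)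
Definition ad_mx n (brk : 'I_n -> 'I_n -> 'rV[R]_n) (x : 'rV[R]_n) : 'M[R]_n :=
  \matrix_(i < n) lie_bracket brk x (basis_vec i).

Definition derived n (brk : 'I_n -> 'I_n -> 'rV[R]_n) (A : 'M[R]_n) : 'M[R]_n :=
  (\sum_(i < n) \sum_(j < n) <<lie_bracket brk (row i A) (row j A)>>)%MS.

Definition solvable_lie n (brk : 'I_n -> 'I_n -> 'rV[R]_n) : Prop :=
  exists k, \rank (iter k (derived brk) 1%:M) = 0%N.

(* a + i b is an eigenvalue of the complexification of the endomorphism
   v |-> v *m A, i.e. A (u + i v) = (a + i b)(u + i v) with u + i v <> 0 *)
Definition complex_eigenvalue n (A : 'M[R]_n) (a b : R) : Prop :=
  exists u v : 'rV[R]_n, (u != 0 \/ v != 0) /\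
    u *m A = a *: u - b *: v /\ v *m A = b *: u + a *: v.

Definition only_real_eigenvalues n (A : 'M[R]_n) : Prop :=
  forall a b, complex_eigenvalue A a b -> b = 0.

Definition completely_solvable n (brk : 'I_n -> 'I_n -> 'rV[R]_n) : Prop :=
  solvable_lie brk /\ forall x, only_real_eigenvalues (ad_mx brk x).

Definition lie_iso n (brk1 brk2 : 'I_n -> 'I_n -> 'rV[R]_n) : Prop :=
  exists P : 'M[R]_n, P \in unitmx /\
    forall x y, lie_bracket brk1 x y *m P = lie_bracket brk2 (x *m P) (y *m P).

(* Exterior algebra of the dual of R^7: a form is given by its         *)
(* coefficients a S on e^S, S = {s_1 < ... < s_p} (all degrees).      *)
(* a S is also the value a(e_{s_1},...,e_{s_p}).                      *)
Definition form := {ffun {set 'I_7} -> R}.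

Definition homog (p : nat) (a : form) : Prop := forall S : {set 'I_7}, #|S| != p -> a S = 0.

Definition shuffle_sign (I J : {set 'I_7}) : R :=
  (-1) ^+ #|[set ij in setX I J | (ij.2 < ij.1)%N]|.

Definition wedge (a b : form) : form :=
  [ffun K : {set 'I_7} => \sum_(I : {set 'I_7} | I \subset K) shuffle_sign I (K :\: I) * a I * b (K :\: I)].

Definition form1 : form := [ffun S : {set 'I_7} => if S == set0 then 1 else 0].
Definition addf (a b : form) : form := [ffun S : {set 'I_7} => a S + b S].
Definition scalef (c : R) (a : form) : form := [ffun S : {set 'I_7} => c * a S].

(* 1-based indexing, as in the paper: e^k for k = 1..7 *)
Definition ix (k : nat) : 'I_7 := inord k.-1.
Definition e1f (k : nat) : form := [ffun S : {set 'I_7} => if S == [set ix k] then 1 else 0].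
Definition eup (l : seq nat) : form := foldr (fun k a => wedge (e1f k) a) form1 l.

(* Chevalley--Eilenberg differential (trivial coefficients):
   d a (x_0..x_p) = sum_{i<j} (-1)^(i+j) a([x_i,x_j], x_0..^i..^j..x_p) *)
Definition pos (K : {set 'I_7}) (k : 'I_7) : nat := #|[set i in K | (i < k)%N]|.
(* a(e_m, e_{s_1},...,e_{s_q}) for S = {s_1<...<s_q} *)
Definition eval_front (a : form) (m : 'I_7) (S : {set 'I_7}) : R :=
  if m \in S then 0 else (-1) ^+ pos S m * a (m |: S).

Definition dCE (brk : 'I_7 -> 'I_7 -> 'rV[R]_7) (a : form) : form :=
  [ffun K : {set 'I_7} => \sum_(i in K) \sum_(j in K | (i < j)%N)
     (-1) ^+ (pos K i + pos K j) *
       \sum_(m < 7) brk i j 0 m * eval_front a m (K :\ i :\ j)].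

(* Metric/orientation determined by the standard G2 form in the basis e_i:
   the e_i are orthonormal, the e^S orthonormal, vol = e^{1..7}. *)
Definition hodge (a : form) : form :=
  [ffun J : {set 'I_7} => shuffle_sign (~: J) J * a (~: J)].
Definition norm2 (a : form) : R := \sum_(S : {set 'I_7}) a S ^+ 2.

Definition phi_std : form :=
  addf (eup [:: 1; 2; 3]%N) (addf (eup [:: 1; 4; 5]%N) (addf (eup [:: 1; 6; 7]%N)
  (addf (eup [:: 2; 4; 6]%N) (addf (scalef (-1) (eup [:: 2; 5; 7]%N))
  (addf (scalef (-1) (eup [:: 3; 4; 7]%N)) (scalef (-1) (eup [:: 3; 5; 6]%N))))))).

Definition closed_form brk (a : form) : Prop := dCE brk a = 0.
Definition exact_form brk (a : form) : Prop :=
  exists b : form, homog 2 b /\ dCE brk b = a.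

Definition is_torsion_form brk (phi tau : form) : Prop :=
  homog 2 tau /\ wedge tau (hodge phi) = 0 /\ dCE brk (hodge phi) = wedge tau phi.

Definition ERP brk (phi tau : form) : Prop :=
  dCE brk tau = addf (scalef (norm2 tau / 6) phi) (scalef (1 / 6) (hodge (wedge tau tau))).

Definition rowl n (l : seq R) : 'rV[R]_n := \row_(k < n) nth 0 l k.
Definition mx4 (l : seq (seq R)) : 'M[R]_4 :=
  \matrix_(i < 4, j < 4) nth 0 (nth [::] l i) j.

(* r_eta: [e1,e2] = e2 + eta e3, [e1,e3] = -eta e2 + e3 (0-based here) *)
Definition brk_r (eta : R) (i j : 'I_3) : 'rV[R]_3 :=
  match (val i, val j)%N with
  | (0, 1) => rowl 3 [:: 0; 1; eta]
  | (1, 0) => - rowl 3 [:: 0; 1; eta]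
  | (0, 2) => rowl 3 [:: 0; - eta; 1]
  | (2, 0) => - rowl 3 [:: 0; - eta; 1]
  | _ => 0
  end.

Definition mu (eta : R) (i : 'I_3) : 'M[R]_4 :=
  match (val i)%N with
  | 0%N => mx4 [:: [:: -(1/2); 0; 0; 0]; [:: 0; -(1/2); 0; 0];
                 [:: 0; 0; 1/2; eta]; [:: 0; 0; - eta; 1/2]]
  | 1%N => mx4 [:: [:: 0; 0; 0; 0]; [:: 0; 0; 0; 0];
                 [:: 0; -1; 0; 0]; [:: -1; 0; 0; 0]]
  | _ => mx4 [:: [:: 0; 0; 0; 0]; [:: 0; 0; 0; 0];
                 [:: -1; 0; 0; 0]; [:: 0; 1; 0; 0]]
  end.

(* semidirect product r |x_mu R^4 on R^7 = R^3 (+) R^4, [X,v] = mu(X) v *)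
Definition semidirect_brk (br : 'I_3 -> 'I_3 -> 'rV[R]_3) (m : 'I_3 -> 'M[R]_4)
  (i j : 'I_7) : 'rV[R]_7 :=
  match split (i : 'I_(3 + 4)), split (j : 'I_(3 + 4)) with
  | inl a, inl b => row_mx (br a b) 0
  | inl a, inr v => row_mx (0 : 'rV[R]_3) ((col v (m a))^T)
  | inr v, inl a => - row_mx (0 : 'rV[R]_3) ((col v (m a))^T)
  | inr _, inr _ => 0
  end.

Definition s_brk (eta : R) : 'I_7 -> 'I_7 -> 'rV[R]_7 :=
  semidirect_brk (brk_r eta) (mu eta).

Definition tau_s : form := addf (scalef 3 (eup [:: 4; 5]%N)) (scalef (-3) (eup [:: 6; 7]%N)).

End G2.

(* Everything said about phi is a finite identity between forms on the 7-dimensional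
   Lie algebra s_eta, whose structure constants are affine in eta with rational
   coefficients. Encoding a form by its coefficients on the 128 subsets of {1,...,7},
   wedge product, Hodge star and Chevalley-Eilenberg differential become finite sums;
   these are evaluated by vm_compute over the rationals, once for the eta-free part of
   the brackets and once for the coefficient of eta, and transported to R along ratr.
   In particular phi = d(-1/2 e^23 + e^45 - e^67). The torsion form is unique because
   wedging with phi is injective on 2-forms, which an explicit left inverse certifies.
   The derived series of s_eta runs through <e2..e7>, <e6,e7> and 0. For eta = 0 every
   ad_x is triangular for the grading <e1> | <e2..e5> | <e6,e7>, so its spectrum is
   real, whereas for eta <> 0 the vector e2 + i e3 is an eigenvector of ad_e1 with
   eigenvalue 1 - i eta. Finally tr ad_x and tr ad_x^2 are invariant under isomorphisms;
   on s_eta they equal 2 x_1 and (3 - 4 eta^2) x_1^2, which forces eta^2 to agree. *)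

From Pilot Require Import Defs.
From HB Require Import structures.
From mathcomp Require Import all_boot all_order all_algebra.
From mathcomp Require Import ring lra.
Import Order.TTheory GRing.Theory Num.Theory.
Local Open Scope ring_scope.
Set Implicit Arguments. Unset Strict Implicit. Unset Printing Implicit Defensive.

(** * Subsets of {1,...,7} as bit lists *)

Fixpoint bitlists (n : nat) : seq (seq bool) :=
  if n is n'.+1 then [seq b :: l | b <- [:: false; true], l <- bitlists n'] else [:: [::]].

Definition bitsets : seq (seq bool) := bitlists 7.
Definition I7 : seq nat := iota 0 7.

Definition bit (s : seq bool) (i : nat) : bool := nth false s i.
Definition subbits (s k : seq bool) : bool := all (fun i => bit s i ==> bit k i) I7.
Definition diffbits (k s : seq bool) : seq bool := mkseq (fun i => bit k i && ~~ bit s i) 7.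
Definition compbits (k : seq bool) : seq bool := mkseq (fun i => ~~ bit k i) 7.
Definition setbit (m : nat) (s : seq bool) : seq bool := mkseq (fun x => (x == m) || bit s x) 7.
Definition clear2bits (k : seq bool) (i j : nat) : seq bool :=
  mkseq (fun x => bit k x && (x != i) && (x != j)) 7.
Definition popcount (s : seq bool) : nat := sumn [seq (bit s x : nat) | x <- I7].
Definition rankbits (s : seq bool) (i : nat) : nat :=
  sumn [seq (bit s x && (x < i)%N) : nat | x <- I7].
Definition inversions (s t : seq bool) : nat :=
  sumn [seq sumn [seq (bit s i && bit t j && (j < i)%N) : nat | j <- I7] | i <- I7].
Definition bits_of_idx (l : seq nat) : seq bool := mkseq (fun i => i.+1 \in l) 7.

Lemma bitlists_size n s : s \in bitlists n -> size s = n.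
Proof.
elim: n s => [|n IH] s; first by rewrite inE => /eqP ->.
by case/allpairsP => [[b l] [_ /IH hl ->]] /=; rewrite hl.
Qed.

Lemma mem_bitlists n s : size s = n -> s \in bitlists n.
Proof.
elim: n s => [|n IH] [|b s] // [hs].
by apply/allpairsP; exists (b, s); split; [case: b | exact: IH |].
Qed.

Lemma mkseq_bitsets f : mkseq f 7 \in bitsets.
Proof. by apply: mem_bitlists; rewrite size_mkseq. Qed.

Lemma uniq_bitsets : uniq bitsets.
Proof. by vm_compute. Qed.

Lemma mem_I7 i : (i \in I7) = (i < 7)%N.
Proof. by rewrite mem_iota. Qed.

Definition set_of_bits (s : seq bool) : {set 'I_7} := [set i : 'I_7 | bit s i].
Definition bits_of_set (S : {set 'I_7}) : seq bool := mkseq (fun i => inord i \in S) 7.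

Lemma in_set_of_bits s (i : 'I_7) : (i \in set_of_bits s) = bit s i.
Proof. by rewrite inE. Qed.

Lemma bits_of_setK : cancel bits_of_set set_of_bits.
Proof. by move=> S; apply/setP => i; rewrite in_set_of_bits /bit nth_mkseq // inord_val. Qed.

Lemma set_of_bits_inj : {in bitsets &, injective set_of_bits}.
Proof.
move=> s t hs ht e; apply: (@eq_from_nth _ false).
  by rewrite (bitlists_size hs) (bitlists_size ht).
move=> i; rewrite (bitlists_size hs) => hi.
by have := congr1 (fun S : {set 'I_7} => Ordinal hi \in S) e; rewrite !in_set_of_bits.
Qed.

Lemma eq_set_of_bits s t : s \in bitsets -> t \in bitsets ->
  (set_of_bits s == set_of_bits t) = (s == t).
Proof. by move=> hs ht; apply/eqP/eqP => [|-> //]; exact: set_of_bits_inj. Qed.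

Section ListSums.
Variable F : nmodType.

Definition lsum {X} (l : seq X) (f : X -> F) : F := foldr (fun x acc => f x + acc) 0 l.

Lemma lsumE {X} (l : seq X) (f : X -> F) : lsum l f = \sum_(x <- l) f x.
Proof. by elim: l => [|x l IH] /=; rewrite ?big_nil ?big_cons ?IH. Qed.

Lemma eq_lsum {X : eqType} (l : seq X) (f g : X -> F) : {in l, f =1 g} -> lsum l f = lsum l g.
Proof. by move=> e; rewrite !lsumE; apply: eq_big_seq. Qed.

Lemma sum_over_sets (G : {set 'I_7} -> F) :
  \sum_(S : {set 'I_7}) G S = lsum bitsets (fun s => G (set_of_bits s)).
Proof.
rewrite lsumE -(big_map set_of_bits predT G); apply: perm_big.
apply: uniq_perm; rewrite ?index_enum_uniq ?map_inj_in_uniq ?uniq_bitsets //.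
  exact: set_of_bits_inj.
move=> S; rewrite mem_index_enum -(bits_of_setK S) map_f //; exact: mkseq_bitsets.
Qed.

Lemma sum_ord7 (G : 'I_7 -> F) : \sum_(i < 7) G i = lsum I7 (fun n => G (inord n)).
Proof.
rewrite lsumE /I7 -/(index_iota 0 7) big_mkord.
by apply: eq_bigr => i _; rewrite inord_val.
Qed.

End ListSums.

Lemma lsumD (F : nmodType) {X} (l : seq X) (f g : X -> F) :
  lsum l (fun x => f x + g x) = lsum l f + lsum l g.
Proof. by rewrite !lsumE big_split. Qed.

Lemma lsumZ (F : pzRingType) {X} (l : seq X) c (f : X -> F) :
  lsum l (fun x => c * f x) = c * lsum l f.
Proof. by rewrite !lsumE big_distrr. Qed.

Inductive bittree (T : Type) := BLeaf of T | BNode of bittree T & bittree T.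

Fixpoint tabulate_tree (T : Type) (n : nat) (a : seq bool -> T) : bittree T :=
  if n is n'.+1 then BNode (tabulate_tree n' (fun l => a (false :: l)))
                           (tabulate_tree n' (fun l => a (true :: l)))
  else BLeaf (a [::]).

Fixpoint lookup (T : Type) (t : bittree T) (s : seq bool) : T :=
  match t, s with
  | BLeaf x, _ => x
  | BNode l r, b :: s' => lookup (if b then r else l) s'
  | BNode l _, [::] => lookup l [::]
  end.

Lemma lookup_tabulate_tree (T : Type) n (a : seq bool -> T) s :
  size s = n -> lookup (tabulate_tree n a) s = a s.
Proof. by elim: n a s => [|n IH] a [|[] s] //= [hs]; rewrite IH. Qed.

(* Memoises [a] in a binary trie: under vm_compute a tabulated function is computed
   once and then read in seven steps. *)
Definition tabulate (T : Type) (a : seq bool -> T) : seq bool -> T :=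
  let t := tabulate_tree 7 a in fun s => lookup t s.

Lemma tabulateE (T : Type) (a : seq bool -> T) s : s \in bitsets -> tabulate a s = a s.
Proof. by move=> hs; apply: lookup_tabulate_tree; apply: bitlists_size. Qed.

Lemma card_ord7 (P : {pred 'I_7}) : #|P| = sumn [seq (inord n \in P : nat) | n <- I7].
Proof.
rewrite -sum1_card big_mkcond sumnE big_map /I7 -/(index_iota 0 7) big_mkord.
by apply: eq_bigr => i _; rewrite inord_val; case: (i \in P).
Qed.

Lemma eq_inord (x : 'I_7) i : (i < 7)%N -> (x == inord i) = (val x == i).
Proof. by move=> hi; rewrite -(inj_eq val_inj) /= inordK. Qed.

Lemma subset_bits s k : (set_of_bits s \subset set_of_bits k) = subbits s k.
Proof.
apply/subsetP/allP => [h i | h i].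
  rewrite mem_I7 => hi; apply/implyP => hs.
  by have := h (inord i); rewrite !in_set_of_bits inordK //; apply.
by rewrite !in_set_of_bits => hs; have := h i; rewrite mem_I7 ltn_ord hs; apply.
Qed.

Lemma setD_bits k s : set_of_bits k :\: set_of_bits s = set_of_bits (diffbits k s).
Proof. by apply/setP => i; rewrite !inE /bit nth_mkseq // andbC. Qed.

Lemma setC_bits k : ~: set_of_bits k = set_of_bits (compbits k).
Proof. by apply/setP => i; rewrite !inE /bit nth_mkseq. Qed.

Lemma setD2_bits k i j : (i < 7)%N -> (j < 7)%N ->
  set_of_bits k :\ inord i :\ inord j = set_of_bits (clear2bits k i j).
Proof.
move=> hi hj; apply/setP => x; rewrite !inE /bit nth_mkseq // !eq_inord //.
by rewrite -!andbA; do !bool_congr.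
Qed.

Lemma setU1_bits m s : (m < 7)%N -> inord m |: set_of_bits s = set_of_bits (setbit m s).
Proof. by move=> hm; apply/setP => x; rewrite !inE /bit nth_mkseq // eq_inord. Qed.

Lemma card_bits s : #|set_of_bits s| = popcount s.
Proof.
rewrite card_ord7; congr sumn; apply/eq_in_map => n; rewrite mem_I7 => hn.
by rewrite in_set_of_bits inordK.
Qed.

Lemma pos_bits k i : (i < 7)%N -> pos (set_of_bits k) (inord i) = rankbits k i.
Proof.
move=> hi; rewrite /pos card_ord7; congr sumn; apply/eq_in_map => n; rewrite mem_I7 => hn.
by rewrite inE in_set_of_bits !inordK.
Qed.

Lemma shuffle_sign_bits (R : rcfType) s t :
  shuffle_sign R (set_of_bits s) (set_of_bits t) = (-1) ^+ inversions s t.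
Proof.
congr (_ ^+ _).
transitivity (\sum_(i < 7) \sum_(j < 7) ((bit s i && bit t j && (j < i)%N) : nat))%N.
  rewrite pair_bigA /= -sum1_card big_mkcond; apply: eq_bigr => [[i j]] _ /=.
  by rewrite !inE /=; case: (_ && _).
rewrite /inversions sumnE big_map /I7 -/(index_iota 0 7) big_mkord; apply: eq_bigr => i _.
by rewrite sumnE big_map -/(index_iota 0 7) big_mkord.
Qed.

Lemma set0_bits : set0 = set_of_bits (nseq 7 false).
Proof. by apply/setP => i; rewrite !inE /bit nth_nseq if_same. Qed.

Lemma set1_bits p : (1 <= p <= 7)%N -> [set ix p] = set_of_bits (bits_of_idx [:: p]).
Proof.
case/andP => h1 h7; apply/setP => i; rewrite !inE /bit nth_mkseq // /ix eq_inord ?inE //.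
  by case: p h1 h7 => // p _ _; rewrite eqSS.
by case: p h1 h7.
Qed.

(** * Forms as coefficient functions *)

Section CoefficientForms.
Variable F : fieldType.
Implicit Types a b : seq bool -> F.

Definition wedge_coef a b k s : F :=
  if subbits s k then (-1) ^+ inversions s (diffbits k s) * a s * b (diffbits k s) else 0.
(* Terms with [a s = 0] are skipped only to speed up evaluation. *)
Definition cwedge a b : seq bool -> F :=
  tabulate (fun k => lsum bitsets (fun s => if a s == 0 then 0 else wedge_coef a b k s)).
Definition chodge a : seq bool -> F :=
  tabulate (fun k => (-1) ^+ inversions (compbits k) k * a (compbits k)).
Definition cadd a b : seq bool -> F := fun k => a k + b k.
Definition cscale c a : seq bool -> F := fun k => c * a k.
Definition cone : seq bool -> F := tabulate (fun k => if k == nseq 7 false then 1 else 0).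
Definition ce1 p : seq bool -> F := tabulate (fun k => if k == bits_of_idx [:: p] then 1 else 0).
Definition ceup (l : seq nat) : seq bool -> F := foldr (fun p a => cwedge (ce1 p) a) cone l.
Definition ceval_front a m s : F :=
  if bit s m then 0 else (-1) ^+ rankbits s m * a (setbit m s).
(* [g i j m] is the coefficient of e_m in [e_i, e_j], with 0-based indices. *)
Definition cdiff (g : nat -> nat -> nat -> F) a : seq bool -> F := tabulate (fun k =>
  lsum I7 (fun i => if bit k i then lsum I7 (fun j => if bit k j && (i < j)%N then
    (-1) ^+ (rankbits k i + rankbits k j) *
      lsum I7 (fun m => g i j m * ceval_front a m (clear2bits k i j)) else 0) else 0)).
Definition cnorm2 a : F := lsum bitsets (fun s => a s ^+ 2).

Definition cphi : seq bool -> F :=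
  cadd (ceup [:: 1; 2; 3]%N) (cadd (ceup [:: 1; 4; 5]%N) (cadd (ceup [:: 1; 6; 7]%N)
  (cadd (ceup [:: 2; 4; 6]%N) (cadd (cscale (-1) (ceup [:: 2; 5; 7]%N))
  (cadd (cscale (-1) (ceup [:: 3; 4; 7]%N)) (cscale (-1) (ceup [:: 3; 5; 6]%N))))))).
Definition ctau : seq bool -> F :=
  cadd (cscale 3 (ceup [:: 4; 5]%N)) (cscale (-3) (ceup [:: 6; 7]%N)).
Definition cprimitive : seq bool -> F :=
  cadd (cscale (-(1/2)) (ceup [:: 2; 3]%N))
       (cadd (ceup [:: 4; 5]%N) (cscale (-1) (ceup [:: 6; 7]%N))).
Definition cerp phi tau : seq bool -> F :=
  cadd (cscale (cnorm2 tau / 6) phi) (cscale (1 / 6) (chodge (cwedge tau tau))).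

Lemma wedge_coefE a b k s : wedge_coef a b k s = a s * wedge_coef (fun _ => 1) b k s.
Proof. by rewrite /wedge_coef; case: subbits; [ring | rewrite mulr0]. Qed.

Lemma cwedgeE a b k : k \in bitsets ->
  cwedge a b k = lsum bitsets (fun s => a s * wedge_coef (fun _ => 1) b k s).
Proof.
move=> hk; rewrite /cwedge tabulateE //; apply: eq_lsum => s _.
by rewrite wedge_coefE; case: eqP => [->|]; rewrite ?mul0r.
Qed.

Lemma cdiffD g0 g1 e a s : s \in bitsets ->
  cdiff (fun i j m => g0 i j m + e * g1 i j m) a s = cdiff g0 a s + e * cdiff g1 a s.
Proof.
move=> hs; rewrite /cdiff !tabulateE // -lsumZ -(lsumD (F := F)); apply: eq_lsum => i _.
case: bit; last by rewrite mulr0 addr0.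
rewrite -lsumZ -(lsumD (F := F)); apply: eq_lsum => j _.
case: (_ && _); last by rewrite mulr0 addr0.
rewrite mulrCA -mulrDr; congr (_ * _); rewrite -lsumZ -(lsumD (F := F)).
by apply: eq_lsum => m _; rewrite mulrDl mulrA.
Qed.

End CoefficientForms.

Section Representation.
Variable R : rcfType.
Implicit Types (a b : Defs.form R) (A B : seq bool -> R).

Definition represents a A := forall s, s \in bitsets -> a (set_of_bits s) = A s.

Lemma represents_eq a b A B : represents a A -> represents b B -> {in bitsets, A =1 B} -> a = b.
Proof.
move=> ha hb e; apply/ffunP => S; rewrite -(bits_of_setK S) ha ?hb ?e //; exact: mkseq_bitsets.
Qed.

Lemma represents_self a : represents a (fun s => a (set_of_bits s)).
Proof. by []. Qed.

Lemma represents_wedge a b A B : represents a A -> represents b B ->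
  represents (wedge a b) (cwedge A B).
Proof.
move=> ha hb s hs; rewrite /cwedge tabulateE // ffunE big_mkcond sum_over_sets.
apply: eq_lsum => t ht; rewrite /wedge_coef subset_bits setD_bits shuffle_sign_bits ha //.
case: eqP => [->|_]; first by case: subbits; rewrite ?mulr0 ?mul0r.
by case: subbits => //; rewrite hb // mkseq_bitsets.
Qed.

Lemma represents_hodge a A : represents a A -> represents (hodge a) (chodge A).
Proof.
move=> ha s hs; rewrite /chodge tabulateE // ffunE setC_bits shuffle_sign_bits ha //.
exact: mkseq_bitsets.
Qed.

Lemma represents_add a b A B : represents a A -> represents b B ->
  represents (Defs.addf a b) (cadd A B).
Proof. by move=> ha hb s hs; rewrite ffunE ha ?hb. Qed.

Lemma represents_scale c a A : represents a A -> represents (scalef c a) (cscale c A).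
Proof. by move=> ha s hs; rewrite ffunE ha. Qed.

Lemma represents_eup l : all (fun p => 1 <= p <= 7)%N l -> represents (eup R l) (ceup R l).
Proof.
elim: l => [|p l IH] /=.
  by move=> _ s hs; rewrite ffunE /cone tabulateE // set0_bits eq_set_of_bits.
case/andP => hp hl; apply: represents_wedge; last exact: IH.
by move=> s hs; rewrite ffunE /ce1 tabulateE // set1_bits // eq_set_of_bits // mkseq_bitsets.
Qed.

Lemma represents_phi : represents (phi_std R) (cphi R).
Proof. by do !first [apply: represents_add | apply: represents_scale | apply: represents_eup]. Qed.

Lemma represents_tau : represents (tau_s R) (ctau R).
Proof. by do !first [apply: represents_add | apply: represents_scale | apply: represents_eup]. Qed.

Definition primitive_form : Defs.form R :=
  Defs.addf (scalef (-(1/2)) (eup R [:: 2; 3]%N))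
            (Defs.addf (eup R [:: 4; 5]%N) (scalef (-1) (eup R [:: 6; 7]%N))).

Lemma represents_primitive : represents primitive_form (cprimitive R).
Proof. by do !first [apply: represents_add | apply: represents_scale | apply: represents_eup]. Qed.

Lemma norm2_cnorm2 a A : represents a A -> norm2 a = cnorm2 A.
Proof. by move=> ha; rewrite /norm2 sum_over_sets; apply: eq_lsum => s hs; rewrite ha. Qed.

Lemma represents_dCE (brk : 'I_7 -> 'I_7 -> 'rV[R]_7) g a A :
  (forall i j m, (i < 7)%N -> (j < 7)%N -> (m < 7)%N ->
     brk (inord i) (inord j) 0 (inord m) = g i j m) ->
  represents a A -> represents (dCE brk a) (cdiff g A).
Proof.
move=> hg ha s hs; rewrite /cdiff tabulateE // ffunE big_mkcond sum_ord7.
apply: eq_lsum => i; rewrite mem_I7 => hi; rewrite in_set_of_bits inordK //.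
case: (bit s i) => //; rewrite big_mkcond sum_ord7.
apply: eq_lsum => j; rewrite mem_I7 => hj; rewrite in_set_of_bits !inordK //.
case: (_ && _) => //; rewrite !pos_bits // sum_ord7; congr (_ * _).
apply: eq_lsum => m; rewrite mem_I7 => hm; rewrite hg //; congr (_ * _).
rewrite /eval_front /ceval_front setD2_bits // in_set_of_bits inordK //.
by case: (bit _ m) => //; rewrite pos_bits // setU1_bits // ha // mkseq_bitsets.
Qed.

Lemma represents_erp phi tau Phi Tau : represents phi Phi -> represents tau Tau ->
  represents (Defs.addf (scalef (norm2 tau / 6) phi) (scalef (1 / 6) (hodge (wedge tau tau))))
             (cerp Phi Tau).
Proof.
move=> hp ht; rewrite (norm2_cnorm2 ht).
by apply: represents_add; apply: represents_scale;
  last apply: represents_hodge; last apply: represents_wedge.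
Qed.

Lemma represents_homog a A p :
  represents a A -> {in bitsets, forall s, popcount s != p -> A s = 0} -> homog p a.
Proof.
move=> ha h S; rewrite -(bits_of_setK S) card_bits => hp.
by rewrite ha ?h ?mkseq_bitsets.
Qed.

End Representation.

Section CoefficientImage.
Variables (F K : fieldType) (f : {rmorphism F -> K}).

Definition cimage (A : seq bool -> F) (B : seq bool -> K) := forall s, f (A s) = B s.

Lemma rmorph_lsum {X} (l : seq X) h h' : (forall x, f (h x) = h' x) -> f (lsum l h) = lsum l h'.
Proof. by move=> e; rewrite !lsumE rmorph_sum; apply: eq_bigr. Qed.

Lemma cimage_tabulate h h' : (forall s, f (h s) = h' s) -> cimage (tabulate h) (tabulate h').
Proof.
rewrite /cimage /tabulate; elim: 7%N h h' => [|n IH] h h' e s /=; first exact: e.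
by case: s => [|[] s] /=; apply: IH.
Qed.

Lemma cimage_wedge_coef A B A' B' k s : cimage A A' -> cimage B B' ->
  f (wedge_coef A B k s) = wedge_coef A' B' k s.
Proof.
move=> ha hb; rewrite /wedge_coef; case: subbits; rewrite ?rmorph0 //.
by rewrite !rmorphM rmorphXn rmorphN1 ha hb.
Qed.

Lemma cimage_wedge A B A' B' : cimage A A' -> cimage B B' -> cimage (cwedge A B) (cwedge A' B').
Proof.
move=> ha hb; apply: cimage_tabulate => k; apply: rmorph_lsum => s.
by rewrite -ha fmorph_eq0; case: eqP => _; rewrite ?rmorph0 //; apply: cimage_wedge_coef.
Qed.

Lemma cimage_hodge A A' : cimage A A' -> cimage (chodge A) (chodge A').
Proof. by move=> ha; apply: cimage_tabulate => k; rewrite rmorphM rmorphXn rmorphN1 ha. Qed.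

Lemma cimage_add A B A' B' : cimage A A' -> cimage B B' -> cimage (cadd A B) (cadd A' B').
Proof. by move=> ha hb s; rewrite rmorphD ha hb. Qed.

Lemma cimage_scale c c' A A' : f c = c' -> cimage A A' -> cimage (cscale c A) (cscale c' A').
Proof. by move=> hc ha s; rewrite rmorphM hc ha. Qed.

Lemma cimage_eup l : cimage (ceup F l) (ceup K l).
Proof.
elim: l => [|p l IH] /=; last apply: cimage_wedge => //.
  by apply: cimage_tabulate => s; case: (_ == _); rewrite ?rmorph0 ?rmorph1.
by apply: cimage_tabulate => s; case: (_ == _); rewrite ?rmorph0 ?rmorph1.
Qed.

Lemma cimage_phi : cimage (cphi F) (cphi K).
Proof.
by do !first [apply: cimage_add | apply: cimage_scale | apply: cimage_eup]; rewrite rmorphN1.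
Qed.

Lemma cimage_tau : cimage (ctau F) (ctau K).
Proof.
by do !first [apply: cimage_add | apply: cimage_scale | apply: cimage_eup];
  rewrite ?rmorphN rmorph_nat.
Qed.

Lemma cimage_primitive : cimage (cprimitive F) (cprimitive K).
Proof.
by do !first [apply: cimage_add | apply: cimage_scale | apply: cimage_eup];
  rewrite ?rmorphN ?fmorph_div ?rmorph1 ?rmorph_nat.
Qed.

Lemma cimage_diff g g' A A' : (forall i j m, f (g i j m) = g' i j m) -> cimage A A' ->
  cimage (cdiff g A) (cdiff g' A').
Proof.
move=> hg ha; apply: cimage_tabulate => k; apply: rmorph_lsum => i.
case: bit; rewrite ?rmorph0 //; apply: rmorph_lsum => j.
case: (_ && _); rewrite ?rmorph0 // rmorphM rmorphXn rmorphN1; congr (_ * _).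
apply: rmorph_lsum => m; rewrite rmorphM hg /ceval_front.
by case: bit; rewrite ?rmorph0 // rmorphM rmorphXn rmorphN1 ha.
Qed.

Lemma cimage_norm2 A A' : cimage A A' -> f (cnorm2 A) = cnorm2 A'.
Proof. by move=> ha; apply: rmorph_lsum => s; rewrite rmorphXn ha. Qed.

Lemma cimage_erp phi tau phi' tau' : cimage phi phi' -> cimage tau tau' ->
  cimage (cerp phi tau) (cerp phi' tau').
Proof.
move=> hp ht; apply: cimage_add; apply: cimage_scale => //.
- by rewrite fmorph_div (cimage_norm2 ht) rmorph_nat.
- by rewrite fmorph_div rmorph1 rmorph_nat.
- by apply: cimage_hodge; apply: cimage_wedge.
Qed.

End CoefficientImage.

(** * The forms on s_eta *)

(* Coefficient of e_k in [e_i, e_j] for i < j, with 1-based indices as in the paper: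
   [bracket_eta0] at eta = 0 and [bracket_eta1] the coefficient of eta. [antisym]
   extends such a table to all pairs of 0-based indices. *)
Definition bracket_eta0 (i j k : nat) : rat :=
  match i, j, k with
  | 1, 2, 2 | 1, 3, 3 | 3, 5, 7 => 1
  | 1, 4, 4 | 1, 5, 5 => -(1/2)
  | 1, 6, 6 | 1, 7, 7 => 1/2
  | 2, 4, 7 | 2, 5, 6 | 3, 4, 6 => -1
  | _, _, _ => 0
  end.

Definition bracket_eta1 (i j k : nat) : rat :=
  match i, j, k with
  | 1, 2, 3 | 1, 7, 6 => 1
  | 1, 3, 2 | 1, 6, 7 => -1
  | _, _, _ => 0
  end.

Definition antisym (c : nat -> nat -> nat -> rat) (i j k : nat) : rat :=
  if (i < j)%N then c i.+1 j.+1 k.+1 else - c j.+1 i.+1 k.+1.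

Lemma splitE (x : 'I_(3 + 4)) :
  split x = if (x < 3)%N then inl (inord x) else inr (inord (x - 3)).
Proof.
case: splitP => [a -> | b ->]; first by congr inl; apply: val_inj; rewrite /= inordK.
by congr inr; apply: val_inj; rewrite /= addKn inordK.
Qed.

Lemma s_brkE (R : rcfType) (eta : R) i j k : (i < 7)%N -> (j < 7)%N -> (k < 7)%N ->
  s_brk eta (inord i) (inord j) 0 (inord k) =
    ratr (antisym bracket_eta0 i j k) + eta * ratr (antisym bracket_eta1 i j k).
Proof.
move=> hi hj hk; rewrite /s_brk /semidirect_brk !splitE !inordK //.
case: i hi => [|[|[|[|[|[|[|i]]]]]]] // hi;
case: j hj => [|[|[|[|[|[|[|j]]]]]]] // hj; rewrite /=.
all: case: k hk => [|[|[|[|[|[|[|k]]]]]]] // hk.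
all: rewrite /= ?rmorphN ?fmorph_div ?rmorph_nat ?rmorph0 ?rmorph1.
all: rewrite /= /brk_r /mu /rowl /mx4 ?mxE ?splitE ?inordK //=.
all: rewrite ?mxE ?splitE ?inordK //=.
all: try ring.
all: try (rewrite mxE ?inordK //=; ring).
all: try (rewrite ?mxE ?inordK //=; ring).
Qed.

Definition ceq (A B : seq bool -> rat) : bool := all (fun k => A k == B k) bitsets.
Definition czero : seq bool -> rat := fun _ => 0.
Definition chomog (p : nat) (A : seq bool -> rat) : bool :=
  all (fun s => (popcount s != p) ==> (A s == 0)) bitsets.
(* As the brackets are affine in eta, [d A = B] for every eta is one identity for
   each part. *)
Definition cdiff_eq (A B : seq bool -> rat) : bool :=
  ceq (cdiff (antisym bracket_eta0) A) B && ceq (cdiff (antisym bracket_eta1) A) czero.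

Lemma cphi_closed : cdiff_eq (cphi rat) czero.
Proof. by vm_compute. Qed.

Lemma cphi_exact : cdiff_eq (cprimitive rat) (cphi rat).
Proof. by vm_compute. Qed.

Lemma cprimitive_homog : chomog 2 (cprimitive rat).
Proof. by vm_compute. Qed.

Lemma ctau_homog : chomog 2 (ctau rat).
Proof. by vm_compute. Qed.

Lemma ctau_wedge_hodge_cphi : ceq (cwedge (ctau rat) (chodge (cphi rat))) czero.
Proof. by vm_compute. Qed.

Lemma cdiff_hodge_cphi : cdiff_eq (chodge (cphi rat)) (cwedge (ctau rat) (cphi rat)).
Proof. by vm_compute. Qed.

Lemma cdiff_ctau : cdiff_eq (ctau rat) (cerp (cphi rat) (ctau rat)).
Proof. by vm_compute. Qed.

(* Row Q expresses X(e_Q) as 1/2 times a signed sum of values (X /\ phi)(e_K), for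
   every 2-form X: a left inverse of X |-> X /\ phi on 2-forms. *)
Definition wedge_phi_inverse : seq (seq nat * seq (seq nat * rat)) := [::
  ([:: 1; 2], [:: ([:: 1; 2; 3; 5; 6], -1); ([:: 1; 2; 3; 4; 7], -1); ([:: 3; 4; 5; 6; 7], -1)]);
  ([:: 1; 3], [:: ([:: 1; 2; 3; 4; 6], -1); ([:: 1; 2; 3; 5; 7], 1); ([:: 2; 4; 5; 6; 7], 1)]);
  ([:: 2; 3], [:: ([:: 1; 2; 3; 4; 5], 1); ([:: 1; 2; 3; 6; 7], 1); ([:: 1; 4; 5; 6; 7], -1)]);
  ([:: 1; 4], [:: ([:: 1; 3; 4; 5; 6], 1); ([:: 1; 2; 4; 5; 7], 1); ([:: 2; 3; 5; 6; 7], -1)]);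
  ([:: 2; 4], [:: ([:: 2; 3; 4; 5; 6], 1); ([:: 1; 2; 4; 6; 7], 1); ([:: 1; 3; 5; 6; 7], 1)]);
  ([:: 3; 4], [:: ([:: 2; 3; 4; 5; 7], -1); ([:: 1; 3; 4; 6; 7], 1); ([:: 1; 2; 5; 6; 7], -1)]);
  ([:: 1; 5], [:: ([:: 1; 2; 4; 5; 6], 1); ([:: 1; 3; 4; 5; 7], -1); ([:: 2; 3; 4; 6; 7], 1)]);
  ([:: 2; 5], [:: ([:: 2; 3; 4; 5; 7], -1); ([:: 1; 3; 4; 6; 7], -1); ([:: 1; 2; 5; 6; 7], 1)]);
  ([:: 3; 5], [:: ([:: 2; 3; 4; 5; 6], -1); ([:: 1; 2; 4; 6; 7], 1); ([:: 1; 3; 5; 6; 7], 1)]);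
  ([:: 4; 5], [:: ([:: 1; 2; 3; 4; 5], 1); ([:: 1; 2; 3; 6; 7], -1); ([:: 1; 4; 5; 6; 7], 1)]);
  ([:: 1; 6], [:: ([:: 2; 3; 4; 5; 7], -1); ([:: 1; 3; 4; 6; 7], -1); ([:: 1; 2; 5; 6; 7], -1)]);
  ([:: 2; 6], [:: ([:: 1; 2; 4; 5; 6], 1); ([:: 1; 3; 4; 5; 7], 1); ([:: 2; 3; 4; 6; 7], -1)]);
  ([:: 3; 6], [:: ([:: 1; 3; 4; 5; 6], 1); ([:: 1; 2; 4; 5; 7], -1); ([:: 2; 3; 5; 6; 7], 1)]);
  ([:: 4; 6], [:: ([:: 1; 2; 3; 4; 6], 1); ([:: 1; 2; 3; 5; 7], 1); ([:: 2; 4; 5; 6; 7], 1)]);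
  ([:: 5; 6], [:: ([:: 1; 2; 3; 5; 6], 1); ([:: 1; 2; 3; 4; 7], -1); ([:: 3; 4; 5; 6; 7], -1)]);
  ([:: 1; 7], [:: ([:: 2; 3; 4; 5; 6], 1); ([:: 1; 2; 4; 6; 7], -1); ([:: 1; 3; 5; 6; 7], 1)]);
  ([:: 2; 7], [:: ([:: 1; 3; 4; 5; 6], -1); ([:: 1; 2; 4; 5; 7], 1); ([:: 2; 3; 5; 6; 7], 1)]);
  ([:: 3; 7], [:: ([:: 1; 2; 4; 5; 6], 1); ([:: 1; 3; 4; 5; 7], 1); ([:: 2; 3; 4; 6; 7], 1)]);
  ([:: 4; 7], [:: ([:: 1; 2; 3; 5; 6], -1); ([:: 1; 2; 3; 4; 7], 1); ([:: 3; 4; 5; 6; 7], -1)]);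
  ([:: 5; 7], [:: ([:: 1; 2; 3; 4; 6], 1); ([:: 1; 2; 3; 5; 7], 1); ([:: 2; 4; 5; 6; 7], -1)]);
  ([:: 6; 7], [:: ([:: 1; 2; 3; 4; 5], -1); ([:: 1; 2; 3; 6; 7], 1); ([:: 1; 4; 5; 6; 7], 1)])
].

Definition inverse_row (Q : seq bool) : seq (seq bool * rat) :=
  let r := nth [::] (map snd wedge_phi_inverse)
             (find (fun r => bits_of_idx r.1 == Q) wedge_phi_inverse) in
  [seq (bits_of_idx p.1, p.2) | p <- r].

(* [phi] is let-bound so that vm_compute evaluates it only once. *)
Lemma wedge_phi_inverseP : let phi := cphi rat in
  all (fun Q => (popcount Q == 2%N) ==> all (fun s => (popcount s == 2%N) ==>
  (lsum (inverse_row Q) (fun p => p.2 / 2 * wedge_coef (fun _ => 1) phi p.1 s)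
     == (s == Q)%:R)) bitsets) bitsets.
Proof. by vm_compute. Qed.


Section RationalForms.
Variable R : rcfType.
Implicit Types (a b : Defs.form R) (A B : seq bool -> rat).

Definition rat_represents a A := represents a (fun s => ratr (A s)).

Lemma rat_representsP a A (A' : seq bool -> R) :
  represents a A' -> cimage ratr A A' -> rat_represents a A.
Proof. by move=> ha hA s hs; rewrite ha // hA. Qed.

Lemma rat_represents_eq a b A B : rat_represents a A -> rat_represents b B -> ceq A B -> a = b.
Proof. by move=> ha hb /allP e; apply: (represents_eq ha hb) => s /e /eqP ->. Qed.

Lemma rat_represents_wedge a b A B : rat_represents a A -> rat_represents b B ->
  rat_represents (wedge a b) (cwedge A B).
Proof.
by move=> ha hb; apply: rat_representsP (represents_wedge ha hb) _; apply: cimage_wedge.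
Qed.

Lemma rat_represents_hodge a A : rat_represents a A -> rat_represents (hodge a) (chodge A).
Proof. by move=> ha; apply: rat_representsP (represents_hodge ha) _; apply: cimage_hodge. Qed.

Lemma rat_represents_phi : rat_represents (phi_std R) (cphi rat).
Proof. exact: rat_representsP (represents_phi R) (cimage_phi _). Qed.

Lemma rat_represents_tau : rat_represents (tau_s R) (ctau rat).
Proof. exact: rat_representsP (represents_tau R) (cimage_tau _). Qed.

Lemma rat_represents_homog p a A : rat_represents a A -> chomog p A -> homog p a.
Proof.
move=> ha /allP h; apply: (represents_homog ha) => s /h hs hp.
by move: hs; rewrite hp => /eqP ->; rewrite rmorph0.
Qed.

Lemma dCE_s_brk_eq eta a b A B : rat_represents a A -> rat_represents b B ->
  cdiff_eq A B -> dCE (s_brk eta) a = b.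
Proof.
move=> ha hb /andP[/allP e0 /allP e1].
have hd := represents_dCE (g := fun i j k => ratr (antisym bracket_eta0 i j k) +
  eta * ratr (antisym bracket_eta1 i j k)) (@s_brkE R eta) ha.
apply: (represents_eq hd hb) => s hs /=; rewrite cdiffD //.
have cim c : cimage ratr (cdiff (antisym c) A) (cdiff (fun i j k => ratr (antisym c i j k))
    (fun s => ratr (A s))) by apply: cimage_diff.
by rewrite -!cim (eqP (e0 s hs)) (eqP (e1 s hs)) rmorph0 mulr0 addr0.
Qed.

Lemma rat_represents0 : rat_represents (0 : Defs.form R) czero.
Proof. by move=> s _; rewrite ffunE rmorph0. Qed.

Lemma rat_represents_primitive : rat_represents (primitive_form R) (cprimitive rat).
Proof. exact: rat_representsP (represents_primitive R) (cimage_primitive _). Qed.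

Lemma rat_represents_erp :
  rat_represents (Defs.addf (scalef (norm2 (tau_s R) / 6) (phi_std R))
                            (scalef (1 / 6) (hodge (wedge (tau_s R) (tau_s R)))))
                 (cerp (cphi rat) (ctau rat)).
Proof.
apply: rat_representsP (represents_erp (represents_phi R) (represents_tau R)) _.
exact: cimage_erp (cimage_phi _) (cimage_tau _).
Qed.

Lemma wedge_phi_invert (X : Defs.form R) Q : homog 2 X -> Q \in bitsets -> popcount Q = 2%N ->
  X (set_of_bits Q) =
    \sum_(p <- inverse_row Q) ratr (p.2 / 2) * wedge X (phi_std R) (set_of_bits p.1).
Proof.
move=> hX hQ pQ; pose X' : seq bool -> R := fun s => X (set_of_bits s).
have hX' s : popcount s != 2%N -> X' s = 0 by rewrite /X' -card_bits; apply: hX.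
have wedgeE K : K \in bitsets -> wedge X (phi_std R) (set_of_bits K) =
    \sum_(s <- bitsets) X' s * wedge_coef (fun _ => 1) (fun t => ratr (cphi rat t)) K s.
  move=> hK; rewrite (represents_wedge (represents_self X) rat_represents_phi) //.
  by rewrite cwedgeE // lsumE.
have inv s : s \in bitsets -> popcount s = 2%N -> \sum_(p <- inverse_row Q)
    ratr (p.2 / 2) * wedge_coef (fun _ => 1) (fun t => ratr (cphi rat t)) p.1 s = (s == Q)%:R :> R.
  move=> hs ps; have /allP/(_ Q hQ) := wedge_phi_inverseP; rewrite pQ eqxx => /allP/(_ s hs).
  rewrite ps eqxx => /eqP/(congr1 (@ratr R)); rewrite ratr_nat => <-.
  rewrite lsumE rmorph_sum; apply: eq_bigr => p _.
  by rewrite rmorphM (cimage_wedge_coef _ (A' := fun _ => 1) (B' := fun t => ratr (cphi rat t))) //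
    => t; rewrite rmorph1.
rewrite (eq_big_seq (fun p => ratr (p.2 / 2) *
    \sum_(s <- bitsets) X' s * wedge_coef (fun _ => 1) (fun t => ratr (cphi rat t)) p.1 s));
  last by move=> p /mapP[q _ ->]; rewrite wedgeE ?mkseq_bitsets.
transitivity (\sum_(s <- bitsets) X' s * (s == Q)%:R).
  rewrite (big_rem Q hQ) /= eqxx mulr1 big1_seq ?addr0 // => s /andP[_].
  by rewrite (mem_rem_uniq _ uniq_bitsets) inE => /andP[/negbTE -> _]; rewrite mulr0.
under [RHS]eq_bigr do rewrite big_distrr.
rewrite exchange_big; apply: eq_big_seq => s hs /=.
have [ps|ps] := eqVneq (popcount s) 2%N.
  by rewrite -inv // big_distrr; apply: eq_bigr => p _ /=; ring.
by rewrite hX' // mul0r big1 // => p _; rewrite mul0r mulr0.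
Qed.

Lemma wedge_phi_inj (X Y : Defs.form R) : homog 2 X -> homog 2 Y ->
  wedge X (phi_std R) = wedge Y (phi_std R) -> X = Y.
Proof.
move=> hX hY e; apply/ffunP => S; rewrite -(bits_of_setK S).
have hS := mkseq_bitsets (fun i => inord i \in S).
have [pS|pS] := eqVneq (popcount (bits_of_set S)) 2%N.
  by rewrite !wedge_phi_invert // e.
by rewrite hX ?hY // card_bits.
Qed.

End RationalForms.

Section G2Structure.
Variables (R : rcfType) (eta : R).

Lemma phi_closed : closed_form (s_brk eta) (phi_std R).
Proof. exact: dCE_s_brk_eq (rat_represents_phi R) (rat_represents0 R) cphi_closed. Qed.

Lemma phi_exact : exact_form (s_brk eta) (phi_std R).
Proof.
exists (primitive_form R); split.
  exact: rat_represents_homog (rat_represents_primitive R) cprimitive_homog.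
exact: dCE_s_brk_eq (rat_represents_primitive R) (rat_represents_phi R) cphi_exact.
Qed.

Lemma tau_torsion : is_torsion_form (s_brk eta) (phi_std R) (tau_s R).
Proof.
split; first exact: rat_represents_homog (rat_represents_tau R) ctau_homog.
split.
  apply: rat_represents_eq (rat_represents0 R) ctau_wedge_hodge_cphi.
  exact: rat_represents_wedge (rat_represents_tau R) (rat_represents_hodge (rat_represents_phi R)).
apply: dCE_s_brk_eq cdiff_hodge_cphi; first exact: rat_represents_hodge (rat_represents_phi R).
exact: rat_represents_wedge (rat_represents_tau R) (rat_represents_phi R).
Qed.

Lemma torsion_form_unique tau : is_torsion_form (s_brk eta) (phi_std R) tau -> tau = tau_s R.
Proof.
case=> h2 [_ hd]; case: tau_torsion => h2s [_ hds].
by apply: wedge_phi_inj => //; rewrite -hd -hds.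
Qed.

Lemma phi_ERP : ERP (s_brk eta) (phi_std R) (tau_s R).
Proof. exact: dCE_s_brk_eq (rat_represents_tau R) (rat_represents_erp R) cdiff_ctau. Qed.

End G2Structure.

(** * Lie algebras given by structure constants *)

Section LieAlgebras.
Variables (R : rcfType) (n : nat).
Implicit Types (brk : 'I_n -> 'I_n -> 'rV[R]_n) (x y u : 'rV[R]_n).

Lemma lie_bracketE brk x y k :
  lie_bracket brk x y 0 k = \sum_i \sum_j x 0 i * y 0 j * brk i j 0 k.
Proof.
rewrite /lie_bracket summxE; apply: eq_bigr => i _; rewrite summxE.
by apply: eq_bigr => j _; rewrite mxE.
Qed.

Lemma basis_vecE (i j : 'I_n) : basis_vec R i 0 j = (i == j)%:R.
Proof. by rewrite /basis_vec mxE eqxx eq_sym. Qed.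

Lemma sum_delta (i : 'I_n) (G : 'I_n -> R) : \sum_j (i == j)%:R * G j = G i.
Proof.
rewrite (bigD1 i) //= eqxx mul1r big1 ?addr0 // => j hj.
by rewrite eq_sym (negbTE hj) mul0r.
Qed.

Lemma lie_bracket_basis brk i j : lie_bracket brk (basis_vec R i) (basis_vec R j) = brk i j.
Proof.
apply/rowP => k; rewrite lie_bracketE.
transitivity (\sum_a (i == a)%:R * brk a j 0 k); last exact: sum_delta.
apply: eq_bigr => a _; rewrite -(sum_delta j (fun b => brk a b 0 k)) big_distrr.
by apply: eq_bigr => b _ /=; rewrite !basis_vecE mulrA.
Qed.

Lemma ad_mxE brk x i k : ad_mx brk x i k = \sum_a x 0 a * brk a i 0 k.
Proof.
rewrite mxE lie_bracketE; apply: eq_bigr => a _.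
rewrite -(sum_delta i (fun b => x 0 a * brk a b 0 k)).
by apply: eq_bigr => b _; rewrite basis_vecE mulrCA mulrA.
Qed.

Lemma mul_ad_mx brk x u : u *m ad_mx brk x = lie_bracket brk x u.
Proof.
apply/rowP => k; rewrite !mxE lie_bracketE.
under eq_bigr do rewrite ad_mxE big_distrr.
by rewrite exchange_big; apply: eq_bigr => a _; apply: eq_bigr => l _ /=; ring.
Qed.

Definition coord_mx (S : pred 'I_n) : 'M[R]_n := diag_mx (\row_m (S m)%:R).
Definition supported (S : pred 'I_n) x := forall m, ~~ S m -> x 0 m = 0.

Lemma supported_coord_mx x S : supported S x <-> (x <= coord_mx S)%MS.
Proof.
split=> [hx | /submxP[c ->] m hm]; last by rewrite mul_mx_diag !mxE (negbTE hm) mulr0.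
have -> : x = x *m coord_mx S; last exact: submxMl.
apply/rowP => m; rewrite mul_mx_diag !mxE.
by case: (boolP (S m)) => h; rewrite ?mulr1 // (hx m h) mul0r.
Qed.

Lemma derived_coord_mx brk A (T S : pred 'I_n) : (A <= coord_mx T)%MS ->
  (forall i j m, T i -> T j -> ~~ S m -> brk i j 0 m = 0) ->
  (derived brk A <= coord_mx S)%MS.
Proof.
move=> hA hb; have hrow i : supported T (row i A).
  by apply/supported_coord_mx; apply: submx_trans hA; exact: row_sub.
apply/sumsmx_subP => i _; apply/sumsmx_subP => j _; rewrite genmxE.
apply/supported_coord_mx => m hm; rewrite lie_bracketE; apply: big1 => a _; apply: big1 => b _.
case: (boolP (T a)) => ta; last by rewrite (hrow i a ta) !mul0r.
case: (boolP (T b)) => tb; last by rewrite (hrow j b tb) mulr0 mul0r.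
by rewrite hb // mulr0.
Qed.

Lemma coord_mx_pred0 : coord_mx pred0 = 0.
Proof. by apply/matrixP => i j; rewrite !mxE mul0rn. Qed.

Lemma coord_mx_predT : coord_mx predT = 1%:M.
Proof. by apply/matrixP => i j; rewrite !mxE; case: eqP. Qed.

Lemma complex_eigen_scalar (c a b p q : R) : b != 0 ->
  c * p = a * p - b * q -> c * q = b * p + a * q -> p = 0 /\ q = 0.
Proof.
move=> hb h1 h2.
have e1 : (c - a) * p = - (b * q) by rewrite mulrBl h1; ring.
have e2 : (c - a) * q = b * p by rewrite mulrBl h2; ring.
have e3 : ((c - a) ^+ 2 + b ^+ 2) * p = 0.
  have : (c - a) * ((c - a) * p) + b * (b * p) = 0 by rewrite e1 -e2; ring.
  by move=> <-; ring.
have nz : (c - a) ^+ 2 + b ^+ 2 != 0.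
  by rewrite paddr_eq0 ?sqr_ge0 // !sqrf_eq0 (negbTE hb) andbF.
have hp : p = 0 by move: e3 => /eqP; rewrite mulf_eq0 (negbTE nz) => /eqP.
split => //; move: e1; rewrite hp mulr0 => /eqP; rewrite eq_sym oppr_eq0 mulf_eq0 (negbTE hb).
by move/eqP.
Qed.

Lemma graded_only_real_eigenvalues (M : 'M[R]_n) (lvl : 'I_n -> nat) :
  (forall i k, i != k -> M i k != 0 -> (lvl i < lvl k)%N) -> only_real_eigenvalues M.
Proof.
move=> hM a b [u [v [nz [eu ev]]]]; apply/eqP/negPn/negP => hb.
have diagonal (w : 'rV[R]_n) k :
    (forall i, (lvl i < lvl k)%N -> w 0 i = 0) -> (w *m M) 0 k = M k k * w 0 k.
  move=> hw; rewrite mxE (bigD1 k) //= big1 ?addr0 1?mulrC // => i hi.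
  have [->|nzM] := eqVneq (M i k) 0; first by rewrite mulr0.
  by rewrite hw ?mul0r // hM.
have low L k : (lvl k < L)%N -> u 0 k = 0 /\ v 0 k = 0.
  elim: L k => [//|L IH] k hk.
  have below (w : 'rV[R]_n) : (forall i, (lvl i < L)%N -> w 0 i = 0) ->
      forall i, (lvl i < lvl k)%N -> w 0 i = 0.
    by move=> hw i hi; apply: hw; apply: leq_trans hi _.
  have du := diagonal u k (below u (fun i hi => (IH i hi).1)).
  have dv := diagonal v k (below v (fun i hi => (IH i hi).2)).
  apply: (complex_eigen_scalar (c := M k k) (a := a) hb).
    by rewrite -du eu !mxE.
  by rewrite -dv ev !mxE.
by case: nz => /eqP []; apply/rowP => k; rewrite mxE; case: (low (lvl k).+1 k (ltnSn _)).
Qed.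

Lemma lie_iso_ad_mx brk1 brk2 P x : P \in unitmx ->
  (forall x y, lie_bracket brk1 x y *m P = lie_bracket brk2 (x *m P) (y *m P)) ->
  ad_mx brk2 (x *m P) = invmx P *m ad_mx brk1 x *m P.
Proof.
move=> hu hP; apply/row_matrixP => i; rewrite !rowE mul_ad_mx.
have hv : (delta_mx 0 i : 'rV[R]_n) = (delta_mx 0 i *m invmx P) *m P.
  by rewrite -mulmxA mulVmx // mulmx1.
by rewrite {1}hv -hP -mul_ad_mx !mulmxA.
Qed.

End LieAlgebras.

(** * The Lie algebras s_eta *)

Definition all_ord7 (P : nat -> nat -> nat -> bool) : bool :=
  all (fun i => all (fun j => all (P i j) I7) I7) I7.

Lemma all_ord7P P : all_ord7 P -> forall i j k : 'I_7, P i j k.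
Proof.
move=> h i j k; move: h => /allP/(_ i); rewrite mem_I7 ltn_ord => /(_ isT).
move=> /allP/(_ j); rewrite mem_I7 ltn_ord => /(_ isT) /allP/(_ k).
by rewrite mem_I7 ltn_ord; apply.
Qed.

Section SEta.
Variable R : rcfType.

Lemma s_brk_ord (eta : R) (i j k : 'I_7) :
  s_brk eta i j 0 k = ratr (antisym bracket_eta0 i j k) + eta * ratr (antisym bracket_eta1 i j k).
Proof. by rewrite -(inord_val i) -(inord_val j) -(inord_val k) s_brkE ?inordK. Qed.

Definition brackets_vanish (T S : pred nat) : bool := all_ord7 (fun i j k =>
  T i ==> T j ==> ~~ S k ==>
  (antisym bracket_eta0 i j k == 0) && (antisym bracket_eta1 i j k == 0)).

Lemma derived_s_brk (eta : R) A (T S : pred nat) : brackets_vanish T S ->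
  (A <= coord_mx R (fun k : 'I_7 => T k))%MS ->
  (derived (s_brk eta) A <= coord_mx R (fun k : 'I_7 => S k))%MS.
Proof.
move=> /all_ord7P h hA; apply: derived_coord_mx hA _ => i j k ti tj sk.
move: (h i j k); rewrite ti tj sk => /andP[/eqP e0 /eqP e1].
by rewrite s_brk_ord e0 e1 rmorph0 mulr0 addr0.
Qed.

Lemma s_solvable (eta : R) : solvable_lie (s_brk eta).
Proof.
exists 3%N; apply/eqP; rewrite mxrank_eq0 -submx0 -(coord_mx_pred0 R 7) /=.
have d1 := @derived_s_brk eta 1%:M predT (fun k => 0 < k)%N isT.
have d2 := @derived_s_brk eta _ (fun k => 0 < k)%N (fun k => 5 <= k)%N isT.
have d3 := @derived_s_brk eta _ (fun k => 5 <= k)%N pred0 isT.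
by apply: d3; apply: d2; apply: d1; rewrite coord_mx_predT.
Qed.

(* For eta = 0, ad_x is triangular for this grading (0-based indices). *)
Definition s_level (k : nat) : nat := if k == 0%N then 0 else if (k < 5)%N then 1 else 2.

Lemma s0_ad_graded (x : 'rV[R]_7) (i k : 'I_7) :
  i != k -> ad_mx (s_brk 0) x i k != 0 -> (s_level i < s_level k)%N.
Proof.
have /all_ord7P h : all_ord7 (fun a i k =>
  (i != k) ==> (antisym bracket_eta0 a i k != 0) ==> (s_level i < s_level k)%N) by [].
move=> hik; apply: contraNT => hl; rewrite ad_mxE big1 // => a _.
move: (h a i k); rewrite hik (negbTE hl) /= implybF negbK => /eqP e.
by rewrite s_brk_ord e mul0r rmorph0 !add0r mulr0.
Qed.

Lemma s0_completely_solvable : completely_solvable (s_brk (0 : R)).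
Proof.
split; first exact: s_solvable.
move=> x; apply: (graded_only_real_eigenvalues (lvl := fun k => s_level k)) => i k.
exact: s0_ad_graded.
Qed.

Lemma s_not_completely_solvable (eta : R) : eta != 0 -> ~ completely_solvable (s_brk eta).
Proof.
move=> he [_ real]; move: he; rewrite -oppr_eq0 => /negP; apply; apply/eqP.
apply: (real (basis_vec R (inord 0)) 1).
exists (basis_vec R (inord 1)), (basis_vec R (inord 2)); split.
  by left; apply/eqP => /rowP/(_ (inord 1)); rewrite basis_vecE !mxE eqxx => /eqP; rewrite oner_eq0.
rewrite !mul_ad_mx !lie_bracket_basis; split; apply/rowP => k; have hk := ltn_ord k.
all: rewrite -[in LHS](inord_val k) s_brkE // !mxE eqxx /= !eq_inord //.
all: case: k hk => -[|[|[|[|[|[|[|k]]]]]]] //= _ _.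
all: by rewrite ?rmorph0 ?rmorphN ?rmorph1; ring.
Qed.

Lemma ad_s_brkE (eta : R) y i k : (i < 7)%N -> (k < 7)%N ->
  ad_mx (s_brk eta) y (inord i) (inord k) = lsum I7 (fun a => y 0 (inord a) *
    (ratr (antisym bracket_eta0 a i k) + eta * ratr (antisym bracket_eta1 a i k))).
Proof.
by move=> hi hk; rewrite ad_mxE sum_ord7; apply: eq_lsum => a; rewrite mem_I7 => ha; rewrite s_brkE.
Qed.

Lemma trace_ad_s (eta : R) y : \tr (ad_mx (s_brk eta) y) = 2 * y 0 ord0.
Proof.
rewrite /mxtrace sum_ord7 (eq_lsum (g := fun i => lsum I7 (fun a => y 0 (inord a) *
    (ratr (antisym bracket_eta0 a i i) + eta * ratr (antisym bracket_eta1 a i i))))); last first.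
  by move=> i; rewrite mem_I7 => hi; rewrite ad_s_brkE.
rewrite (_ : ord0 = inord 0); last by apply: val_inj; rewrite /= inordK.
rewrite /lsum /I7 /= ?rmorph0 ?rmorphN ?fmorph_div ?rmorph_nat ?rmorph1.
ring.
Qed.

Lemma trace_ad_s_sqr (eta : R) y :
  \tr (ad_mx (s_brk eta) y *m ad_mx (s_brk eta) y) = (3 - 4 * eta ^+ 2) * y 0 ord0 ^+ 2.
Proof.
pose ad i k := lsum I7 (fun a => y 0 (inord a) *
    (ratr (antisym bracket_eta0 a i k) + eta * ratr (antisym bracket_eta1 a i k))).
rewrite /mxtrace sum_ord7 (eq_lsum (g := fun i => lsum I7 (fun k => ad i k * ad k i))); last first.
  move=> i; rewrite mem_I7 => hi; rewrite mxE sum_ord7; apply: eq_lsum => k.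
  by rewrite mem_I7 => hk; rewrite !ad_s_brkE.
rewrite (_ : ord0 = inord 0); last by apply: val_inj; rewrite /= inordK.
rewrite /ad /lsum /I7 /= ?rmorph0 ?rmorphN ?fmorph_div ?rmorph_nat ?rmorph1.
by field.
Qed.

Lemma s_not_isomorphic (e e' : R) : 0 <= e -> 0 <= e' -> e != e' -> ~ lie_iso (s_brk e) (s_brk e').
Proof.
move=> he he' hne [P [hu hP]].
pose x := basis_vec R (ord0 : 'I_7).
have hx : x 0 ord0 = 1 by rewrite basis_vecE eqxx.
have hconj := lie_iso_ad_mx x hu hP.
have sim M : \tr (invmx P *m M *m P) = \tr M by rewrite mxtrace_mulC mulmxA mulmxV // mul1mx.
have sq M : (invmx P *m M *m P) *m (invmx P *m M *m P) = invmx P *m (M *m M) *m P.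
  by rewrite -!mulmxA (mulmxA P) mulmxV // mul1mx.
have tr1 := trace_ad_s e' (x *m P); rewrite hconj sim trace_ad_s hx in tr1.
have tr2 := trace_ad_s_sqr e' (x *m P); rewrite hconj sq sim trace_ad_s_sqr hx in tr2.
have y1 : (x *m P) 0 ord0 = 1 by lra.
rewrite y1 in tr2; case: (ltgtP e e') => [lt|lt|eq]; [nra | nra | by rewrite eq eqxx in hne].
Qed.

End SEta.

Theorem mainTheorem6 (R : rcfType) :
  (forall eta : R,
     exact_form (s_brk eta) (@phi_std R)
  /\ closed_form (s_brk eta) (@phi_std R)
  /\ is_torsion_form (s_brk eta) (@phi_std R) (@tau_s R)
  /\ (forall tau' : Defs.form R, is_torsion_form (s_brk eta) (@phi_std R) tau' -> tau' = @tau_s R)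
  /\ ERP (s_brk eta) (@phi_std R) (@tau_s R))
  /\ completely_solvable (s_brk (0 : R))
  /\ (forall eta : R, eta != 0 ->
        solvable_lie (s_brk eta) /\ ~ completely_solvable (s_brk eta))
  /\ (forall eta eta' : R, 0 <= eta -> 0 <= eta' -> eta != eta' ->
        ~ lie_iso (s_brk eta) (s_brk eta')).
Proof.
split.
  move=> eta; split; first exact: phi_exact.
  split; first exact: phi_closed.
  split; first exact: tau_torsion.
  split; first exact: torsion_form_unique.
  exact: phi_ERP.
split; first exact: s0_completely_solvable.
split; first by move=> eta he; split; [exact: s_solvable | exact: s_not_completely_solvable].
exact: s_not_isomorphic.
Qed.
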